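(* Let $k\ge 1$ and let $0\le b_0<b_1<\dots<b_k$ and $r_0>r_1>\dots>r_k=0$ be reals, let $s_i=\frac{b_i-b_{i-1}}{r_{i-1}-r_i}$ for $1\le i\le k$, and assume $s_1<\dots<s_k$. Let $p^i_1(t)=\min\{1,(e^{t/s_i}-1)/(e-1)\}$ for $1\le i\le k$, and define the profile $\hat p=(\hat p_0,\dots,\hat p_k)$ by $\hat p_0=1-p^1_1$, $\hat p_i=p^i_1-p^{i+1}_1$ for $1\le i\le k-1$, $\hat p_k=p^k_1$. Then for every $t\ge 0$, $$X_{\hat p}(t)\le \frac{e}{e-1}\,\textsc{opt}(t),$$ i.e. the expected cost of the online strategy with profile $\hat p$ is at most $\frac{e}{e-1}$ times the optimal offline cost, for every termination time $t$.
   Context: Additive multislope ski rental: states $0,\dots,k$, state $i$ has buying cost $b_i$ and rental rate $r_i$; holding state $i$ for duration $t$ costs $b_i+r_i t$, and moving from state $i$ to state $j>i$ costs $b_j-b_i$. The optimal offline cost for a game of length $t$ is $\textsc{opt}(t)=\min_i(b_i+r_it)$. For a profile $p=(p_0(t),\dots,p_k(t))$ (nonnegative functions summing to $1$ for every $t$, $p_i(t)$ being the probability of being in state $i$ at time $t$), the expected buying cost is $B_p(t)=\sum_i p_i(t)b_i$, the expected rental rate is $R_p(t)=\sum_ip_i(t)r_i$, and the expected total cost up to time $t$ is $X_p(t)=B_p(t)+\int_0^tR_p(z)\,dz$. *)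

From Stdlib Require Import Reals Lra.
From Coquelicot Require Import Coquelicot.
Open Scope R_scope.

(* States are 0..k; b i = buying cost, r i = rental rate of state i. *)

Fixpoint opt_upto (b r : nat -> R) (n : nat) (t : R) : R :=
  match n with
  | O => b O + r O * t
  | S m => Rmin (opt_upto b r m t) (b n + r n * t)
  end.
Definition OPT (k : nat) (b r : nat -> R) (t : R) : R := opt_upto b r k t.

(* A profile p : nat -> R -> R, p i t = probability of being in state i at time t. *)
Definition Bp (k : nat) (b : nat -> R) (p : nat -> R -> R) (t : R) : R :=
  sum_f_R0 (fun i => p i t * b i) k.
Definition Rp (k : nat) (r : nat -> R) (p : nat -> R -> R) (t : R) : R :=
  sum_f_R0 (fun i => p i t * r i) k.
Definition Xp (k : nat) (b r : nat -> R) (p : nat -> R -> R) (t : R) : R :=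
  Bp k b p t + RInt (Rp k r p) 0 t.

Definition slope (b r : nat -> R) (i : nat) : R :=
  (b i - b (i - 1)%nat) / (r (i - 1)%nat - r i).

Definition p1 (b r : nat -> R) (i : nat) (t : R) : R :=
  Rmin 1 ((exp (t / slope b r i) - 1) / (exp 1 - 1)).

Definition phat (k : nat) (b r : nat -> R) (i : nat) (t : R) : R :=
  if Nat.eqb i 0 then 1 - p1 b r 1 t
  else if Nat.ltb i k then p1 b r i t - p1 b r (S i) t
  else if Nat.eqb i k then p1 b r k t
  else 0.

From Stdlib Require Import Arith Reals Lra Lia.
From Coquelicot Require Import Coquelicot.
Open Scope R_scope.

(* The additive instance splits into k classical ski-rental instances: instance i has
   buying cost s_i and rental rate d_i = r_{i-1} - r_i, and p^i_1 is the optimal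
   randomized strategy for it, which pays exactly e/(e-1) min(s_i, t).  Summation by
   parts turns the cost of \hat p into b_0 + sum_i d_i (s_i p^i_1(t) + int_0^t (1 - p^i_1)),
   i.e. b_0 + e/(e-1) sum_i d_i min(s_i, t), whereas state j costs
   b_j + r_j t = b_0 + sum_{i <= j} d_i s_i + sum_{i > j} d_i t >= b_0 + sum_i d_i min(s_i, t). *)

Lemma exp1_gt_2 : 2 < exp 1.
Proof. pose proof (exp_ineq1 1 ltac:(lra)); lra. Qed.

Lemma exp_le_compat x y : x <= y -> exp x <= exp y.
Proof. intros [Hlt | ->]; [left; exact (exp_increasing _ _ Hlt) | lra]. Qed.

Definition buy_prob (s t : R) : R := Rmin 1 ((exp (t / s) - 1) / (exp 1 - 1)).

Lemma buy_prob_below s t : 0 < s -> t <= s ->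
  buy_prob s t = (exp (t / s) - 1) / (exp 1 - 1).
Proof.
  intros Hs Hts; pose proof exp1_gt_2.
  assert (exp (t / s) <= exp 1).
  { apply exp_le_compat, (Rmult_le_reg_r s); [exact Hs|]. field_simplify; lra. }
  apply Rmin_right, (Rmult_le_reg_r (exp 1 - 1)); [lra|]. field_simplify; lra.
Qed.

Lemma buy_prob_above s t : 0 < s -> s <= t -> buy_prob s t = 1.
Proof.
  intros Hs Hst; pose proof exp1_gt_2.
  assert (exp 1 <= exp (t / s)).
  { apply exp_le_compat, (Rmult_le_reg_r s); [exact Hs|]. field_simplify; lra. }
  apply Rmin_left, (Rmult_le_reg_r (exp 1 - 1)); [lra|]. field_simplify; lra.
Qed.

Lemma is_RInt_rent_prob_below s t : 0 < s -> 0 <= t <= s ->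
  is_RInt (fun z => 1 - buy_prob s z) 0 t
    (exp 1 / (exp 1 - 1) * t - s * buy_prob s t).
Proof.
  intros Hs Ht; pose proof exp1_gt_2.
  set (G z := (exp 1 * z - s * exp (z / s)) / (exp 1 - 1)).
  replace (exp 1 / (exp 1 - 1) * t - s * buy_prob s t) with (minus (G t) (G 0)).
  2:{ unfold minus, plus, opp, G; simpl. rewrite buy_prob_below by lra.
      rewrite Rdiv_0_l, exp_0. field; lra. }
  apply (is_RInt_ext (fun z => (exp 1 - exp (z / s)) / (exp 1 - 1))).
  { intros z Hz. rewrite Rmin_left, Rmax_right in Hz by lra.
    simpl. rewrite buy_prob_below by lra. field; lra. }
  apply (is_RInt_derive G).
  - intros z _. unfold G. auto_derive; [lra|]. unfold Rdiv. field; lra.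
  - intros z _. apply (ex_derive_continuous (V := R_NormedModule)). auto_derive. lra.
Qed.

(* The rent paid up to [t]; with the [s * buy_prob s t] spent on buying, the total is
   exactly [e/(e-1) * min s t]. *)
Lemma is_RInt_rent_prob s t : 0 < s -> 0 <= t ->
  is_RInt (fun z => 1 - buy_prob s z) 0 t
    (exp 1 / (exp 1 - 1) * Rmin s t - s * buy_prob s t).
Proof.
  intros Hs Ht. destruct (Rle_lt_dec t s) as [Hts | Hst].
  - rewrite Rmin_right by lra. now apply is_RInt_rent_prob_below.
  - rewrite Rmin_left, (buy_prob_above s t) by lra.
    replace (exp 1 / (exp 1 - 1) * s - s * 1)
      with (plus (exp 1 / (exp 1 - 1) * s - s * buy_prob s s) (scal (t - s) 0)).
    2:{ rewrite buy_prob_above by lra. unfold plus, scal; simpl; unfold mult; simpl. ring. }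
    apply (is_RInt_Chasles (V := R_NormedModule) _ 0 s t).
    + apply is_RInt_rent_prob_below; lra.
    + apply (is_RInt_ext (fun _ => 0)); [|apply (is_RInt_const (V := R_NormedModule))].
      intros z Hz. rewrite Rmin_left in Hz by lra. rewrite buy_prob_above by lra. simpl; ring.
Qed.

Lemma sum_n_m_minus (u v : nat -> R) m n :
  sum_n_m (fun i => u i - v i) m n = sum_n_m u m n - sum_n_m v m n :> R.
Proof.
  destruct (le_lt_dec m n) as [Hmn | Hnm].
  - induction Hmn as [|n Hmn IHn].
    + now rewrite !sum_n_n.
    + rewrite !sum_n_Sm, IHn by lia. unfold plus; simpl. ring.
  - rewrite !sum_n_m_zero by exact Hnm. unfold zero; simpl. ring.
Qed.

Lemma sum_n_m_mult_l_R (c : R) (u : nat -> R) m n :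
  sum_n_m (fun i => c * u i) m n = c * sum_n_m u m n :> R.
Proof. exact (sum_n_m_mult_l (K := R_Ring) c u m n). Qed.

Lemma sum_n_m_le_loc (u v : nat -> R) m n :
  (forall i, (m <= i <= n)%nat -> u i <= v i) -> sum_n_m u m n <= sum_n_m v m n.
Proof.
  intros Huv. rewrite (sum_n_m_ext_loc u (fun i => Rmin (u i) (v i))).
  - apply sum_n_m_le. intros i. apply Rmin_r.
  - intros i Hi. symmetry. apply Rmin_left, Huv, Hi.
Qed.

Lemma sum_n_m_telescope (x : nat -> R) m n : (m <= n)%nat ->
  sum_n_m (fun i => x (i - 1)%nat - x i) (S m) n = x m - x n :> R.
Proof.
  induction 1 as [|n Hmn IHn].
  - rewrite sum_n_m_zero by lia. unfold zero; simpl. ring.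
  - rewrite sum_n_Sm, IHn by lia. unfold plus; simpl. rewrite Nat.sub_0_r. ring.
Qed.

Lemma sum_f_R0_by_parts (Q x : nat -> R) n :
  sum_f_R0 (fun i => (Q i - Q (S i)) * x i) n =
  Q 0%nat * x 0%nat - Q (S n) * x n - sum_n_m (fun i => Q i * (x (i - 1)%nat - x i)) 1 n.
Proof.
  induction n as [|n IHn]; simpl.
  - rewrite sum_n_m_zero by lia. unfold zero; simpl. ring.
  - rewrite IHn, sum_n_Sm by lia. unfold plus; simpl. rewrite Nat.sub_0_r. ring.
Qed.

Lemma is_RInt_zero {V : NormedModule R_AbsRing} a c :
  is_RInt (fun _ => @zero V) a c zero.
Proof.
  pose proof (is_RInt_const (V := V) a c zero) as Hconst.
  now rewrite (scal_zero_r (K := R_Ring) (V := NormedModule.ModuleSpace R_AbsRing V)) in Hconst.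
Qed.

Lemma is_RInt_sum_n_m {V : NormedModule R_AbsRing} (f : nat -> R -> V) (I : nat -> V) a c m n :
  (forall i, (m <= i <= n)%nat -> is_RInt (f i) a c (I i)) ->
  is_RInt (fun z => sum_n_m (fun i => f i z) m n) a c (sum_n_m I m n).
Proof.
  destruct (le_lt_dec m n) as [Hmn | Hnm].
  - induction Hmn as [|n Hmn IHn]; intros Hf.
    + apply (is_RInt_ext (f m)); [intros; now rewrite sum_n_n|].
      rewrite sum_n_n. apply Hf; lia.
    + apply (is_RInt_ext (fun z => plus (sum_n_m (fun i => f i z) m n) (f (S n) z))).
      { intros z _. rewrite sum_n_Sm by lia. reflexivity. }
      rewrite sum_n_Sm by lia.
      apply is_RInt_plus; [apply IHn; intros i Hi |]; apply Hf; lia.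
  - intros _. apply (is_RInt_ext (fun _ => zero)).
    { intros z _. rewrite sum_n_m_zero by exact Hnm. reflexivity. }
    rewrite sum_n_m_zero by exact Hnm. exact (is_RInt_zero a c).
Qed.

Definition tail_prob (k : nat) (b r : nat -> R) (i : nat) (t : R) : R :=
  if Nat.eqb i 0 then 1 else if Nat.leb i k then p1 b r i t else 0.

Lemma phat_tail_prob k b r i t : (1 <= k)%nat ->
  phat k b r i t = tail_prob k b r i t - tail_prob k b r (S i) t.
Proof.
  intros Hk. unfold phat, tail_prob.
  destruct (Nat.eqb_spec i 0), (Nat.eqb_spec (S i) 0), (Nat.ltb_spec i k),
    (Nat.eqb_spec i k), (Nat.leb_spec i k), (Nat.leb_spec (S i) k);
    subst; try lia; ring.
Qed.

Lemma sum_phat_mul k b r t (x : nat -> R) : (1 <= k)%nat ->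
  sum_f_R0 (fun i => phat k b r i t * x i) k =
  x 0%nat - sum_n_m (fun i => p1 b r i t * (x (i - 1)%nat - x i)) 1 k.
Proof.
  intros Hk.
  rewrite (sum_eq _ (fun i => (tail_prob k b r i t - tail_prob k b r (S i) t) * x i))
    by (intros i _; now rewrite phat_tail_prob).
  rewrite sum_f_R0_by_parts.
  rewrite (sum_n_m_ext_loc _ (fun i => p1 b r i t * (x (i - 1)%nat - x i))).
  - unfold tail_prob. simpl Nat.eqb.
    replace (Nat.leb (S k) k) with false by (symmetry; apply Nat.leb_gt; lia). ring.
  - intros i Hi. unfold tail_prob.
    destruct (Nat.eqb_spec i 0), (Nat.leb_spec i k); try lia. reflexivity.
Qed.

Section AdditiveSkiRental.

Variables (k : nat) (b r : nat -> R).
Hypothesis hb : forall i, (i < k)%nat -> b i < b (S i).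
Hypothesis hr : forall i, (i < k)%nat -> r (S i) < r i.

Lemma rate_drop_pos i : (1 <= i <= k)%nat -> 0 < r (i - 1)%nat - r i.
Proof.
  intros Hi. pose proof (hr (i - 1) ltac:(lia)).
  replace (S (i - 1)) with i in * by lia. lra.
Qed.

Lemma slope_pos i : (1 <= i <= k)%nat -> 0 < slope b r i.
Proof.
  intros Hi. pose proof (hb (i - 1) ltac:(lia)).
  replace (S (i - 1)) with i in * by lia.
  apply Rdiv_lt_0_compat; [lra | now apply rate_drop_pos].
Qed.

Lemma buy_step_slope i : (1 <= i <= k)%nat ->
  b i - b (i - 1)%nat = (r (i - 1)%nat - r i) * slope b r i.
Proof. intros Hi. pose proof (rate_drop_pos i Hi). unfold slope. field. lra. Qed.

Hypothesis hrk : r k = 0.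

Lemma Rp_phat z : (1 <= k)%nat ->
  Rp k r (phat k b r) z = sum_n_m (fun i => (r (i - 1)%nat - r i) * (1 - p1 b r i z)) 1 k.
Proof.
  intros Hk. unfold Rp. rewrite sum_phat_mul by exact Hk. symmetry.
  rewrite (sum_n_m_ext _ (fun i => (r (i - 1)%nat - r i) - p1 b r i z * (r (i - 1)%nat - r i)))
    by (intros; simpl; ring).
  rewrite sum_n_m_minus, sum_n_m_telescope, hrk by lia. ring.
Qed.

Lemma Xp_phat t : (1 <= k)%nat -> 0 <= t ->
  Xp k b r (phat k b r) t =
  b 0%nat + exp 1 / (exp 1 - 1) *
    sum_n_m (fun i => (r (i - 1)%nat - r i) * Rmin (slope b r i) t) 1 k.
Proof.
  intros Hk Ht.
  assert (Hrent : is_RInt (Rp k r (phat k b r)) 0 t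
    (sum_n_m (fun i => (r (i - 1)%nat - r i) *
       (exp 1 / (exp 1 - 1) * Rmin (slope b r i) t - slope b r i * p1 b r i t)) 1 k)).
  { apply (is_RInt_ext
      (fun z => sum_n_m (fun i => (r (i - 1)%nat - r i) * (1 - p1 b r i z)) 1 k)).
    { intros z _. now rewrite Rp_phat. }
    apply (is_RInt_sum_n_m (V := R_NormedModule)). intros i Hi.
    apply (is_RInt_scal (fun z => 1 - buy_prob (slope b r i) z)).
    apply is_RInt_rent_prob; [now apply slope_pos | exact Ht]. }
  unfold Xp, Bp. rewrite (is_RInt_unique _ _ _ _ Hrent), sum_phat_mul by exact Hk.
  rewrite <- sum_n_m_mult_l_R.
  transitivity (b 0%nat + sum_n_m (fun i => (r (i - 1)%nat - r i) *
      (exp 1 / (exp 1 - 1) * Rmin (slope b r i) t - slope b r i * p1 b r i t)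
      - p1 b r i t * (b (i - 1)%nat - b i)) 1 k).
  { rewrite sum_n_m_minus. ring. }
  f_equal. apply sum_n_m_ext_loc. intros i Hi.
  rewrite <- (Ropp_minus_distr (b i)), buy_step_slope by lia. simpl. ring.
Qed.

Lemma state_cost_ge n t : (n <= k)%nat ->
  b 0%nat + sum_n_m (fun i => (r (i - 1)%nat - r i) * Rmin (slope b r i) t) 1 k
  <= b n + r n * t.
Proof.
  intros Hn.
  rewrite (sum_n_m_Chasles _ 1 n k) by lia. unfold plus; simpl.
  assert (Hbuy : sum_n_m (fun i => (r (i - 1)%nat - r i) * Rmin (slope b r i) t) 1 n
                 <= b n - b 0%nat).
  { replace (b n - b 0%nat) with (-1 * (b 0%nat - b n)) by ring.
    rewrite <- (sum_n_m_telescope b 0 n), <- sum_n_m_mult_l_R by lia.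
    apply sum_n_m_le_loc. intros i Hi.
    rewrite <- (Ropp_minus_distr (b i)), buy_step_slope by lia.
    pose proof (rate_drop_pos i ltac:(lia)).
    assert (Rmin (slope b r i) t <= slope b r i) by apply Rmin_l. nra. }
  assert (Hrent : sum_n_m (fun i => (r (i - 1)%nat - r i) * Rmin (slope b r i) t) (S n) k
                  <= r n * t).
  { rewrite <- (Rminus_0_r (r n)), <- hrk, <- (sum_n_m_telescope r n k), Rmult_comm,
      <- sum_n_m_mult_l_R by lia.
    apply sum_n_m_le_loc. intros i Hi.
    pose proof (rate_drop_pos i ltac:(lia)).
    assert (Rmin (slope b r i) t <= t) by apply Rmin_r. nra. }
  lra.
Qed.

Lemma opt_upto_ge n t : (n <= k)%nat ->
  b 0%nat + sum_n_m (fun i => (r (i - 1)%nat - r i) * Rmin (slope b r i) t) 1 k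
  <= opt_upto b r n t.
Proof.
  induction n as [|n IHn]; intros Hn; simpl.
  - now apply state_cost_ge.
  - apply Rmin_glb; [apply IHn; lia | now apply state_cost_ge].
Qed.

End AdditiveSkiRental.

Theorem theorem3p4 (k : nat) (b r : nat -> R)
  (hk : (1 <= k)%nat)
  (hb0 : 0 <= b 0%nat)
  (hb : forall i : nat, (i < k)%nat -> b i < b (S i))
  (hr : forall i : nat, (i < k)%nat -> r (S i) < r i)
  (hrk : r k = 0)
  (hs : forall i : nat, (1 <= i)%nat -> (i < k)%nat -> slope b r i < slope b r (S i)) :
  forall t : R, 0 <= t ->
    Xp k b r (phat k b r) t <= exp 1 / (exp 1 - 1) * OPT k b r t.
Proof.
  intros t Ht.
  pose proof (opt_upto_ge k b r hr hrk k t (le_n k)) as Hopt.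
  rewrite (Xp_phat k b r hb hr hrk t hk Ht).
  assert (Hratio : 1 <= exp 1 / (exp 1 - 1)).
  { pose proof exp1_gt_2. apply (Rmult_le_reg_r (exp 1 - 1)); [lra|]. field_simplify; lra. }
  unfold OPT. nra.
Qed.
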